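(* Let $M,N\in\mathbb{S}^{q+r}$. If there exists a real $\alpha\ge 0$ such that $M-\alpha N>0$, then $\mathcal{Z}_r(N)\subseteq\mathcal{Z}_r^+(M)$. Moreover, if $N\in\boldsymbol{\Pi}_{q,r}$ and $N_{22}<0$, then $\mathcal{Z}_r(N)\subseteq\mathcal{Z}_r^+(M)$ if and only if there exists a real $\alpha\ge 0$ such that $M-\alpha N>0$.
   Context: $\mathbb{S}^k$ denotes the real symmetric $k\times k$ matrices; for symmetric matrices, $A\ge 0$ ($A>0$) means positive semidefinite (definite), $A<0$ negative definite. $A^\dagger$ is the Moore–Penrose pseudo-inverse. Any $N\in\mathbb{S}^{q+r}$ is partitioned as $N=\begin{bmatrix}N_{11}&N_{12}\\ N_{21}&N_{22}\end{bmatrix}$ with $N_{11}\in\mathbb{S}^q$, $N_{22}\in\mathbb{S}^r$. The generalized Schur complement is $N\mid N_{22}:=N_{11}-N_{12}N_{22}^\dagger N_{21}$. The set $\boldsymbol{\Pi}_{q,r}$ consists of all $N\in\mathbb{S}^{q+r}$ with $N_{22}\le 0$, $N\mid N_{22}\ge 0$ and $\ker N_{22}\subseteq\ker N_{12}$. Define $\mathcal{Z}_r(\Pi)=\{Z\in\mathbb{R}^{r\times q}:\begin{bmatrix}I_q\\ Z\end{bmatrix}^\top\Pi\begin{bmatrix}I_q\\ Z\end{bmatrix}\ge 0\}$ and $\mathcal{Z}_r^+(\Pi)$ the same with $>0$. *)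

From HB Require Import structures.
From mathcomp Require Import all_boot all_order all_algebra.
From mathcomp Require Import boolp classical_sets reals.
Set Implicit Arguments. Unset Strict Implicit. Unset Printing Implicit Defensive.
Import Order.TTheory GRing.Theory Num.Theory.
Local Open Scope ring_scope.

Section Defs.
Variable R : realType.

Definition symmx n (A : 'M[R]_n) : Prop := A^T = A.
Definition psdmx n (A : 'M[R]_n) : Prop :=
  forall x : 'cV[R]_n, 0 <= (x^T *m A *m x) 0 0.
Definition pdmx n (A : 'M[R]_n) : Prop :=
  forall x : 'cV[R]_n, x != 0 -> 0 < (x^T *m A *m x) 0 0.
Definition ndmx n (A : 'M[R]_n) : Prop :=
  forall x : 'cV[R]_n, x != 0 -> (x^T *m A *m x) 0 0 < 0.

Definition is_mpinv m n (A : 'M[R]_(m, n)) (X : 'M[R]_(n, m)) : Prop :=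
  [/\ A *m X *m A = A, X *m A *m X = X,
      (A *m X)^T = A *m X & (X *m A)^T = X *m A].
(* Moore-Penrose pseudo-inverse (the unique matrix satisfying the Penrose conditions) *)
Definition mpinv m n (A : 'M[R]_(m, n)) : 'M[R]_(n, m) :=
  xget 0 [set X | is_mpinv A X].

Definition gschur q r (N : 'M[R]_(q + r)) : 'M[R]_q :=
  ulsubmx N - ursubmx N *m mpinv (drsubmx N) *m dlsubmx N.

Definition PiSet q r (N : 'M[R]_(q + r)) : Prop :=
  [/\ symmx N, psdmx (- drsubmx N), psdmx (gschur N) &
      forall x : 'cV[R]_r, drsubmx N *m x = 0 -> ursubmx N *m x = 0].

Definition stackI q r (Z : 'M[R]_(r, q)) : 'M[R]_(q + r, q) := col_mx 1%:M Z.

Definition Zset q r (P : 'M[R]_(q + r)) (Z : 'M[R]_(r, q)) : Prop :=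
  psdmx ((stackI Z)^T *m P *m stackI Z).
Definition Zplus q r (P : 'M[R]_(q + r)) (Z : 'M[R]_(r, q)) : Prop :=
  pdmx ((stackI Z)^T *m P *m stackI Z).
End Defs.

(* If [M - alpha N > 0] with [alpha >= 0], then on the range of [[I; Z]] the form of
   [M] dominates [alpha] times that of [N], which gives the first claim.
   Conversely, let [N22 < 0] and [S] be the Schur complement of [N22]. Writing
   [w = (x, y)] and [e = y + N22^-1 N21 x] we get [w'Nw = x'Sx + e'N22 e]; when this is
   nonnegative, the rank-one [D = e (Sx)' / x'Sx] satisfies [Dx = e] and, by
   Cauchy-Schwarz for [S], [S + D'N22 D >= 0], so [Z = D - N22^-1 N21] lies in
   [Z_r(N)] and maps [x] to [y]. Hence [Z_r(N) <= Z_r^+(M)] forces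
   [w'Nw >= 0, w <> 0 => w'Mw > 0], and the strict S-lemma yields [alpha]: after
   subtracting a small multiple of the identity from [M] (compactness of the unit
   sphere), [alpha] is the supremum of [w'Mw / w'Nw] over [w'Nw < 0], which a
   two-dimensional argument bounds by every such ratio with [w'Nw > 0]. *)

From HB Require Import structures.
From mathcomp Require Import all_boot all_order all_algebra.
From mathcomp Require Import boolp classical_sets reals.
From mathcomp Require Import topology normedtype derive matrix_normedtype.
From mathcomp Require Import ring lra.
Import Order.TTheory GRing.Theory Num.Theory.
Import numFieldNormedType.Exports.
Set Implicit Arguments. Unset Strict Implicit. Unset Printing Implicit Defensive.
Local Open Scope ring_scope.
Local Open Scope classical_set_scope.

Lemma continuous_sum (R : realType) (T : topologicalType) (I : Type) (s : seq I)
    (F : I -> T -> R) :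
  (forall i, continuous (F i)) -> continuous (fun x => \sum_(i <- s) F i x).
Proof.
move=> cF; elim: s => [|i s IHs] x.
  by under eq_fun do rewrite big_nil; exact: cvg_cst.
under eq_fun do rewrite big_cons.
exact: (@continuousD _ R^o _ (F i) _ x (cF i x) (IHs x)).
Qed.

Lemma pos_quadratic_root (R : rcfType) (a b c : R) : a < 0 -> 0 < c ->
  exists2 t, 0 < t & c + t * b + t ^+ 2 * a = 0.
Proof.
move=> a_lt0 c_gt0; have d_ge0 : 0 <= b ^+ 2 - 4 * a * c by nra.
set s := Num.sqrt (b ^+ 2 - 4 * a * c).
have s2 : s ^+ 2 = b ^+ 2 - 4 * a * c by rewrite sqr_sqrtr.
have s_ge0 : 0 <= s by rewrite sqrtr_ge0.
have bs_gt0 : 0 < b + s by nra.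
exists ((b + s) / (- (2 * a))); first by rewrite divr_gt0 // oppr_gt0; nra.
have a_neq0 : a != 0 by rewrite lt_eqF.
have : 4 * a * (c + (b + s) / - (2 * a) * b + ((b + s) / - (2 * a)) ^+ 2 * a)
    = s ^+ 2 - (b ^+ 2 - 4 * a * c) by field.
by rewrite s2 subrr => /eqP; rewrite !mulf_eq0 pnatr_eq0 (negbTE a_neq0) => /eqP.
Qed.

Section UnitSphere.
Variables (R : realType) (k : nat).
Implicit Types (f g : 'rV[R]_k -> R) (w : 'rV[R]_k).

Lemma sphere_neq0 w : `|w| = 1 -> w != 0.
Proof. by apply: contraPN => /eqP ->; rewrite normr0 => /eqP; rewrite eq_sym oner_eq0. Qed.

Lemma sphere_homogeneous (P : 'rV[R]_k -> Prop) :
  (forall t w, 0 < t -> P w -> P (t *: w)) ->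
  (forall w, `|w| = 1 -> P w) -> forall w, w != 0 -> P w.
Proof.
move=> P_scale P_sphere w w_neq0; have w_gt0 : 0 < `|w| by rewrite normr_gt0.
have -> : w = `|w| *: (`|w|^-1 *: w) by rewrite scalerA divff ?scale1r ?gt_eqF.
by apply/P_scale/P_sphere; rewrite // normrZ normfV normr_id mulVf ?gt_eqF.
Qed.

Lemma compact_sphere_ge g : continuous g -> compact [set w | `|w| = 1 /\ 0 <= g w].
Proof.
move=> cg; apply: bounded_closed_compact.
  by exists 1; split => // M M_gt1 w [/= -> _]; exact/ltW.
apply: closedI.
  apply: (@preimage_closed _ _ (fun w : 'rV[R]_k => `|w|) [set 1]); last exact: closed_eq.
  by move=> x _; apply: norm_continuous.
apply: (@preimage_closed _ _ g [set x | 0 <= x]); last exact: closed_ge.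
by move=> x _; apply: cg.
Qed.

Lemma sphere_min_gt0 f g : continuous f -> continuous g ->
    (forall w, `|w| = 1 -> 0 <= g w -> 0 < f w) ->
  exists2 c, 0 < c & forall w, `|w| = 1 -> 0 <= g w -> c <= f w.
Proof.
move=> cf cg f_gt0; have [A0|A0] := pselect ([set w | `|w| = 1 /\ 0 <= g w] !=set0).
  have [c] := compact_EVT_min A0 (compact_sphere_ge cg) (continuous_subspaceT cf).
  rewrite inE => -[c1 gc] cmin.
  by exists (f c) => [|w w1 gw]; [exact: f_gt0 | apply: cmin; rewrite inE].
by exists 1 => // w w1 gw; exfalso; apply: A0; exists w.
Qed.

Lemma sphere_ub f : continuous f -> exists D, forall w, `|w| = 1 -> f w <= D.
Proof.
move=> cf; have [A0|A0] := pselect ([set w : 'rV[R]_k | `|w| = 1 /\ 0 <= 0 :> R] !=set0).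
  have cA := compact_sphere_ge (@cst_continuous _ _ 0).
  have [c _ cmax] := compact_EVT_max A0 cA (continuous_subspaceT cf).
  by exists (f c) => w w1; apply: cmax; rewrite inE.
by exists 0 => w w1; exfalso; apply: A0; exists w.
Qed.

End UnitSphere.

Section QuadraticForms.
Variables (R : realType) (k : nat).
Implicit Types (A B : 'M[R]_k) (u v w : 'rV[R]_k).

Definition qf A w : R := (w *m A *m w^T) 0 0.
Definition bf A u v : R := (u *m A *m v^T) 0 0.

Lemma qfZ A t w : qf A (t *: w) = t ^+ 2 * qf A w.
Proof. by rewrite /qf linearZ /= -!scalemxAl -scalemxAr scalerA mxE expr2. Qed.

Lemma bfZl A t u v : bf A (t *: u) v = t * bf A u v.
Proof. by rewrite /bf -!scalemxAl mxE. Qed.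

Lemma bfZr A t u v : bf A u (t *: v) = t * bf A u v.
Proof. by rewrite /bf linearZ /= -scalemxAr mxE. Qed.

Lemma qf_opp A w : qf (- A) w = - qf A w.
Proof. by rewrite /qf mulmxN mulNmx mxE. Qed.

Lemma qfD A u v : qf A (u + v) = qf A u + (bf A u v + bf A v u) + qf A v.
Proof. by rewrite /qf /bf linearD /= !mulmxDl !mulmxDr !mxE; ring. Qed.

Lemma qf_subZ A B a w : qf (A - a *: B) w = qf A w - a * qf B w.
Proof. by rewrite /qf mulmxBr mulmxBl -scalemxAr -scalemxAl !mxE. Qed.

Lemma qf0 A : qf A 0 = 0.
Proof. by rewrite /qf !mul0mx mxE. Qed.

Lemma qf1_gt0 w : w != 0 -> 0 < qf 1%:M w.
Proof.
move=> w_neq0; rewrite /qf mulmx1 mxE.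
have sq_ge0 i : 0 <= w 0 i * w^T i 0 by rewrite mxE -expr2 sqr_ge0.
rewrite lt_def sumr_ge0 ?andbT // psumr_eq0 //; apply: contra w_neq0 => /allP w0.
apply/eqP/matrixP => i j; rewrite ord1 mxE.
by have := w0 j (mem_index_enum _); rewrite mxE -expr2 sqrf_eq0 => /eqP.
Qed.

Lemma continuous_qf A : continuous (qf A).
Proof.
have -> : qf A = fun w => \sum_j (\sum_i w 0 i * A i j) * w 0 j.
  by apply: funext => w; rewrite /qf mxE; apply: eq_bigr => j _; rewrite !mxE.
apply: continuous_sum => j x.
apply: (continuousM (s := fun w : 'rV[R]_k => \sum_i w 0 i * A i j) (t := fun w => w 0 j));
  last exact: coord_continuous.
apply: continuous_sum => i y.
apply: (continuousM (s := fun w : 'rV[R]_k => w 0 i) (t := fun=> A i j));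
  [exact: coord_continuous | exact: cst_continuous].
Qed.
Arguments continuous_qf A [x t] _.


Lemma qf_ratio_sep M N : (forall w, 0 <= qf N w -> 0 <= qf M w) ->
  forall u v, 0 < qf N u -> qf N v < 0 -> qf M v / qf N v <= qf M u / qf N u.
Proof.
move=> NM u v Nu_gt0 Nv_lt0; set l := qf M u / qf N u.
rewrite leNgt; apply/negP; rewrite ltr_ndivlMr // => Mv_lt.
set G := M - l *: N.
have Gu : qf G u = 0 by rewrite qf_subZ /l divfK ?subrr // gt_eqF.
have Gv : qf G v < 0 by rewrite qf_subZ subr_lt0.
(* With [v' = +-v] chosen so that the cross term of [G] is nonpositive, [N] vanishes
   at some [u + t v'] with [t > 0], where [G] is negative. *)
have [s [s2 s_cross]] : exists s : R, s ^+ 2 = 1 /\ s * (bf G u v + bf G v u) <= 0.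
  have [c_le0|c_gt0] := lerP (bf G u v + bf G v u) 0.
    by exists 1; rewrite expr1n mul1r.
  by exists (-1); rewrite sqrrN expr1n mulN1r oppr_le0 ltW.
pose v' := s *: v.
have cross A : bf A u v' + bf A v' u = s * (bf A u v + bf A v u).
  by rewrite bfZr bfZl mulrDr.
have [t t_gt0 root] := @pos_quadratic_root _ _ (bf N u v' + bf N v' u) _ Nv_lt0 Nu_gt0.
pose w := u + t *: v'.
have qfw A : qf A w = qf A u + t * (bf A u v' + bf A v' u) + t ^+ 2 * qf A v.
  by rewrite qfD qfZ qfZ s2 mul1r bfZr bfZl mulrDr.
have Nw : qf N w = 0 by rewrite qfw.
have : 0 <= qf G w by rewrite qf_subZ Nw mulr0 subr0 NM // Nw.
rewrite qfw Gu cross add0r.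
have : t * (s * (bf G u v + bf G v u)) <= 0 by rewrite pmulr_rle0.
have : t ^+ 2 * qf G v < 0 by rewrite pmulr_rlt0 ?exprn_gt0.
lra.
Qed.

Lemma qf_slack M N :
    (forall w, w != 0 -> 0 <= qf N w -> 0 < qf M w) ->
  exists2 e, 0 < e &
    forall w, `|w| = 1 -> 0 <= qf N w -> 0 < qf (M - e *: 1%:M) w.
Proof.
move=> MN; have MN1 w : `|w| = 1 -> 0 <= qf N w -> 0 < qf M w.
  by move=> /sphere_neq0; apply: MN.
have [c c_gt0 Mc] := sphere_min_gt0 (continuous_qf M) (continuous_qf N) MN1.
have [D ID] := sphere_ub (continuous_qf 1%:M).
have D1_gt0 : 0 < `|D| + 1 by rewrite ltr_wpDl.
pose e := c / (`|D| + 1); have e_gt0 : 0 < e by rewrite divr_gt0.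
have eD : e * (`|D| + 1) = c by rewrite /e divfK // gt_eqF.
exists e => // w w1 Nw; rewrite qf_subZ.
have := Mc w w1 Nw; have := le_trans (ID w w1) (ler_norm D); nra.
Qed.

Lemma qf_multiplier_sphere M N :
    (forall w, `|w| = 1 -> 0 <= qf N w -> 0 < qf M w) ->
  exists2 a, 0 <= a & forall w, `|w| = 1 -> 0 <= qf (M - a *: N) w.
Proof.
move=> MN.
have NM w : 0 <= qf N w -> 0 <= qf M w.
  have [->|] := eqVneq w 0; first by rewrite !qf0.
  move: w; apply: (sphere_homogeneous (P := fun w => 0 <= qf N w -> 0 <= qf M w)).
    by move=> t w t_gt0 Pw; rewrite !qfZ !pmulr_rge0 ?exprn_gt0.
  by move=> w w1 Nw; apply/ltW/MN.
have [d d_gt0 Nd] : exists2 d, 0 < d &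
    forall w, `|w| = 1 -> qf M w <= 0 -> d <= - qf N w.
  have neg_side w : `|w| = 1 -> 0 <= qf (- M) w -> 0 < qf (- N) w.
    move=> w1; rewrite !qf_opp oppr_ge0 oppr_gt0; apply: contraTT.
    by rewrite -leNgt -ltNge; apply: MN.
  have [d d_gt0 Nd] := sphere_min_gt0 (continuous_qf (- N)) (continuous_qf (- M)) neg_side.
  by exists d => // w w1 Mw; rewrite -qf_opp Nd // qf_opp oppr_ge0.
have [D MD] := sphere_ub (continuous_qf (- M)).
pose B := `|D| / d; have B_ge0 : 0 <= B by rewrite divr_ge0 // ltW.
have Bd : B * d = `|D| by rewrite /B divfK // gt_eqF.
have ratio_ub w : `|w| = 1 -> qf N w < 0 -> qf M w / qf N w <= B.
  move=> w1 Nw; rewrite ler_ndivrMr //.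
  have [Mw_gt0|Mw_le0] := ltP 0 (qf M w); first by nra.
  have := Nd w w1 Mw_le0; have := le_trans (MD w w1) (ler_norm D); rewrite qf_opp; nra.
pose S := [set x : R | x = 0 \/ exists w, [/\ `|w| = 1, qf N w < 0 & x = qf M w / qf N w]].
have S_sup : has_sup S.
  by split; [exists 0; left | exists B => x [->|[w [w1 Nw ->]]] //; exact: ratio_ub].
exists (sup S); first by apply: sup_upper_bound => //; left.
move=> w w1; rewrite qf_subZ subr_ge0.
have [Nw|Nw|Nw] := ltgtP (qf N w) 0; last by rewrite Nw mulr0; apply/ltW/MN; rewrite ?Nw.
- by rewrite -ler_ndivrMr //; apply: sup_upper_bound => //; right; exists w.
- rewrite -ler_pdivlMr //; apply: ge_sup; first by exists 0; left.
  move=> x [->|[v [v1 Nv ->]]]; last exact: qf_ratio_sep.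
  by rewrite divr_ge0 // ltW // MN // ltW.
Qed.

Lemma S_lemma_strict M N :
    (forall w, w != 0 -> 0 <= qf N w -> 0 < qf M w) ->
  exists2 a, 0 <= a & forall w, w != 0 -> 0 < qf (M - a *: N) w.
Proof.
move=> MN; have [e e_gt0 Me] := qf_slack MN.
have [a a_ge0 Ma] := qf_multiplier_sphere Me.
exists a => //; apply: sphere_homogeneous => [t w t_gt0|w w1].
  by rewrite qfZ; apply: mulr_gt0; rewrite exprn_gt0.
have -> : qf (M - a *: N) w = qf (M - e *: 1%:M - a *: N) w + e * qf 1%:M w.
  by rewrite !qf_subZ; ring.
by rewrite ltr_wpDl ?Ma // mulr_gt0 // qf1_gt0 // sphere_neq0.
Qed.

End QuadraticForms.

Section SchurComplement.
Variable R : realType.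

Lemma qf_trmx k (A : 'M[R]_k) (x : 'cV[R]_k) : (x^T *m A *m x) 0 0 = qf A x^T.
Proof. by rewrite /qf trmxK. Qed.

Lemma mulmx_congr k l (A : 'M[R]_k) (S : 'M[R]_(k, l)) (x : 'cV[R]_l) :
  x^T *m (S^T *m A *m S) *m x = (S *m x)^T *m A *m (S *m x).
Proof. by rewrite trmx_mul !mulmxA. Qed.

Definition pos_where_nonneg k (M N : 'M[R]_k) : Prop :=
  forall x : 'cV[R]_k, x != 0 -> 0 <= (x^T *m N *m x) 0 0 -> 0 < (x^T *m M *m x) 0 0.

Lemma S_lemma_pdmx k (M N : 'M[R]_k) :
  pos_where_nonneg M N -> exists alpha, 0 <= alpha /\ pdmx (M - alpha *: N).
Proof.
move=> MN; have [|a a_ge0 Ma] := @S_lemma_strict R k M N.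
  by move=> w w_neq0; have := MN w^T; rewrite !qf_trmx trmxK trmx_eq0; apply.
by exists a; split => // x x_neq0; rewrite qf_trmx Ma // trmx_eq0.
Qed.

Lemma ndmx_unit r (A : 'M[R]_r) : ndmx A -> A \in unitmx.
Proof.
move=> A_nd; rewrite -row_free_unit -kermx_eq0; apply/negPn/negP.
move=> /matrix0Pn [i [j kerA_ij]].
pose u := row i (kermx A).
have uT_neq0 : u^T != 0.
  by apply: contraNneq kerA_ij => /(congr1 (fun B : 'cV[R]_r => B j 0)); rewrite !mxE => ->.
have := A_nd _ uT_neq0; rewrite trmxK.
by rewrite (_ : u *m A = 0) ?mul0mx ?mxE ?ltxx // /u -row_mul mulmx_ker row0.
Qed.

Lemma mpinv_unit r (A : 'M[R]_r) : A \in unitmx -> mpinv A = invmx A.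
Proof.
move=> A_unit.
have : is_mpinv A (invmx A).
  by split; rewrite ?mulmxV ?mulVmx ?mul1mx ?mulmx1 ?trmx1.
move=> /(xgetI 0); rewrite -/(mpinv A) => -[AXA _ _ _].
have <- : invmx A *m (A *m mpinv A *m A) *m invmx A = mpinv A.
  by rewrite !mulmxA mulVmx // mul1mx -mulmxA mulmxV // mulmx1.
by rewrite AXA mulVmx // mul1mx.
Qed.

Lemma schur_qf q r p (N : 'M[R]_(q + r)) (X : 'M[R]_(q, p)) (Y : 'M[R]_(r, p)) :
    symmx N -> drsubmx N \in unitmx ->
  (col_mx X Y)^T *m N *m col_mx X Y =
    X^T *m (ulsubmx N - ursubmx N *m invmx (drsubmx N) *m dlsubmx N) *m X +
    (Y + invmx (drsubmx N) *m dlsubmx N *m X)^T *m drsubmx N *m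
      (Y + invmx (drsubmx N) *m dlsubmx N *m X).
Proof.
move=> sN uD.
set N11 := ulsubmx N; set N12 := ursubmx N; set N21 := dlsubmx N.
set N22 := drsubmx N; set K := invmx N22 *m N21.
have t21 : N21^T = N12 by rewrite /N21 trmx_dlsub sN.
have t22 : N22^T = N22 by rewrite /N22 trmx_drsub sN.
have e1 : (Y + K *m X)^T *m N22 = Y^T *m N22 + X^T *m N12.
  rewrite linearD /= mulmxDl; congr (_ + _).
  by rewrite !trmx_mul /K trmx_inv t22 t21 -!mulmxA mulVmx // mulmx1.
rewrite -{1}(submxK N) -/N11 -/N12 -/N21 -/N22 tr_col_mx mul_row_block mul_row_col.
rewrite e1 mulmxBr mulmxBl !mulmxDl !mulmxDr !mulmxA (mulmxK uD).
set a := X^T *m N11 *m X; set b := Y^T *m N21 *m X; set c := X^T *m N12 *m Y.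
set d := Y^T *m N22 *m Y; set e := X^T *m N12 *m invmx N22 *m N21 *m X.
rewrite [d + b]addrC [c + e]addrC -!addrA; congr (_ + _).
by rewrite addrCA; congr (_ + _); rewrite addrCA addKr addrC.
Qed.

Lemma Zplus_of_multiplier q r (M N : 'M[R]_(q + r)) (a : R) :
  0 <= a -> pdmx (M - a *: N) -> forall Z, Zset N Z -> Zplus M Z.
Proof.
move=> a_ge0 MaN Z NZ x x_neq0; rewrite mulmx_congr.
have Zx_neq0 : stackI Z *m x != 0.
  by rewrite /stackI mul_col_mx mul1mx col_mx_eq0 negb_and x_neq0.
have := MaN _ Zx_neq0; have := NZ x.
rewrite mulmx_congr mulmxBr mulmxBl -scalemxAr -scalemxAl !mxE; nra.
Qed.

Lemma psd_cauchy_schwarz q (P : 'M[R]_q) (x v : 'cV[R]_q) :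
    P^T = P -> psdmx P -> 0 < (x^T *m P *m x) 0 0 ->
  ((x^T *m P *m v) 0 0) ^+ 2 <= (x^T *m P *m x) 0 0 * (v^T *m P *m v) 0 0.
Proof.
move=> sP P_psd; set p := (x^T *m P *m x) 0 0; set s := (x^T *m P *m v) 0 0.
set t := (v^T *m P *m v) 0 0 => p_gt0.
have svx : (v^T *m P *m x) 0 0 = s.
  transitivity (((v^T *m P *m x)^T) 0 0); first by rewrite [RHS]mxE.
  by rewrite !trmx_mul trmxK sP mulmxA.
have := P_psd (p *: v - s *: x); rewrite qf_trmx linearB /= !linearZ /=.
rewrite scalerN -scaleNr qfD !qfZ !bfZl !bfZr /bf !trmxK -!qf_trmx svx -/s -/p -/t.
move=> psd_pv_sx; have : 0 <= p * (p * t - s ^+ 2) by nra.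
by rewrite pmulr_rge0 // subr_ge0.
Qed.

Lemma psd_completion q r (P : 'M[R]_q) (Q : 'M[R]_r) (x : 'cV[R]_q) (e : 'cV[R]_r) :
    P^T = P -> psdmx P -> ndmx Q ->
    0 <= (x^T *m P *m x) 0 0 + (e^T *m Q *m e) 0 0 ->
  exists D : 'M[R]_(r, q), D *m x = e /\ psdmx (P + D^T *m Q *m D).
Proof.
move=> sP P_psd Q_nd; set p := (x^T *m P *m x) 0 0; set qe := (e^T *m Q *m e) 0 0.
move=> pqe_ge0; have [p_gt0|p_le0] := ltP 0 p; last first.
  have -> : e = 0.
    apply/eqP; apply: contraTT pqe_ge0 => e_neq0; rewrite -ltNge.
    by have := Q_nd e e_neq0; rewrite -/qe; lra.
  by exists 0; rewrite mul0mx trmx0 !mul0mx addr0.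
pose D := p^-1 *: (e *m (x^T *m P)).
have Dv (v : 'cV[R]_q) : D *m v = (p^-1 * (x^T *m P *m v) 0 0) *: e.
  by rewrite /D -scalemxAl -[e *m _ *m v]mulmxA {1}[x^T *m P *m v]mx11_scalar mul_mx_scalar scalerA.
exists D; split; first by rewrite Dv -/p mulVf ?scale1r // gt_eqF.
move=> v; rewrite mulmxDr mulmxDl mxE mulmx_congr Dv [X in _ + X]qf_trmx linearZ /= qfZ.
rewrite -qf_trmx -/qe; have := psd_cauchy_schwarz v sP P_psd p_gt0; rewrite -/p.
set s := (x^T *m P *m v) 0 0; set t := (v^T *m P *m v) 0 0 => cs.
set c := p^-1 * s; have cp : c * p = s by rewrite /c mulrAC mulVf ?mul1r // gt_eqF.
have cs_le : c * s <= t by rewrite -(ler_pM2r p_gt0) mulrAC cp -expr2 mulrC.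
have : c ^+ 2 * (- p) <= c ^+ 2 * qe by rewrite ler_wpM2l ?sqr_ge0 //; lra.
nra.
Qed.

Lemma Zset_sub_pos_where_nonneg q r (M N : 'M[R]_(q + r)) :
    PiSet N -> ndmx (drsubmx N) ->
    (forall Z, Zset N Z -> Zplus M Z) -> pos_where_nonneg M N.
Proof.
move=> [sN _ S_psd _] N22_nd ZNM w w_neq0 Nw.
have uD := ndmx_unit N22_nd.
set K := invmx (drsubmx N) *m dlsubmx N.
set S := ulsubmx N - ursubmx N *m invmx (drsubmx N) *m dlsubmx N.
have sS : S^T = S.
  rewrite /S linearB /= !trmx_mul trmx_inv trmx_ulsub trmx_ursub trmx_dlsub.
  by rewrite trmx_drsub sN mulmxA.
rewrite /gschur mpinv_unit // -/S in S_psd.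
rewrite -(vsubmxK w) in w_neq0 Nw *.
set x := usubmx w in w_neq0 Nw *; set y := dsubmx w in w_neq0 Nw *.
rewrite schur_qf // mxE -/S -/K in Nw.
have [D [Dx D_psd]] := psd_completion sS S_psd N22_nd Nw.
have Zx : (D - K) *m x = y by rewrite mulmxBl Dx addrK.
have NZ : Zset N (D - K).
  by rewrite /Zset /stackI schur_qf // trmx1 mul1mx !mulmx1 -/S -/K subrK.
have x_neq0 : x != 0.
  by apply: contraNneq w_neq0 => x0; rewrite -Zx x0 mulmx0 col_mx0.
by have := ZNM _ NZ x x_neq0; rewrite mulmx_congr /stackI mul_col_mx mul1mx Zx.
Qed.

End SchurComplement.

Theorem mainTheorem10 (R : realType) (q r : nat) (M N : 'M[R]_(q + r)) :
  symmx M -> symmx N ->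
  ((exists alpha : R, 0 <= alpha /\ pdmx (M - alpha *: N)) ->
     forall Z : 'M[R]_(r, q), Zset N Z -> Zplus M Z) /\
  (PiSet N -> ndmx (drsubmx N) ->
     ((forall Z : 'M[R]_(r, q), Zset N Z -> Zplus M Z) <->
      (exists alpha : R, 0 <= alpha /\ pdmx (M - alpha *: N)))).
Proof.
move=> _ _; split=> [[a [a_ge0 MaN]]|PiN N22_nd]; first exact: Zplus_of_multiplier MaN.
split=> [ZNM|[a [a_ge0 MaN]]]; last exact: Zplus_of_multiplier MaN.
exact/S_lemma_pdmx/Zset_sub_pos_where_nonneg.
Qed.
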